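(* Let $g\in F$. Then there exists $m\in\mathbb{N}$ such that for every $t\in(0,2^{-m})\cap S_0$ one has $\omega(t)\equiv\omega(g(t))\pmod 3$. Here $$S_0=\{t\in(0,1)\cap\mathbb{Z}[1/2]:\omega(t)=0,\ |t|\text{ even}\}.$$
   Context: Thompson's group $F$ is the group of piecewise linear homeomorphisms of $[0,1]$ that are differentiable except at finitely many dyadic rationals with slopes in $2^{\mathbb{Z}}$; $g(t)$ denotes the image of $t$ under $g$. The weight $\omega$ on finite binary words is defined by triples with - $(L,R,B)(\emptyset)=(0,1,2)$, - $(L,R,B)(z0)=(L(z),B(z),R(z))$, - $(L,R,B)(z1)=(B(z),R(z),L(z))$, and $\omega(z)=L(z)\in\mathbb{Z}_3$. This is the color of the region left of vertex $z$ (path word, $0$ = left, $1$ = right) in the proper $3$-coloring of the complement of the infinite rooted planar binary tree with the regions left of, right of and below the root colored $0,1,2$. For a dyadic rational $t\in(0,1)$, write $t=.a_1\cdots a_n$ for its terminating binary expansion with $a_n=1$, and set $|t|=n$ and $\omega(t)=\omega(a_1\cdots a_n)$. *)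

From Stdlib Require Import Reals List Arith ZArith.
Import ListNotations.
Open Scope R_scope.

Definition dyadic (x : R) : Prop :=
  exists (a : Z) (n : nat), x = IZR a / 2 ^ n.

(* Thompson's group F, as piecewise-linear maps of [0,1]:
   there are dyadic breakpoints 0 = x_0 < x_1 < ... < x_N = 1 such that on
   each [x_i, x_{i+1}] the map g is affine with slope 2^s_i (s_i in Z),
   g 0 = 0 and g 1 = 1.  (Such a g is an increasing PL homeomorphism of [0,1].) *)
Definition thompsonF (g : R -> R) : Prop :=
  g 0 = 0 /\ g 1 = 1 /\
  exists bp : list R,
    (2 <= length bp)%nat /\ nth 0 bp 0 = 0 /\ last bp 0 = 1 /\
    Forall dyadic bp /\
    forall i : nat, (S i < length bp)%nat ->
      nth i bp 0 < nth (S i) bp 0 /\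
      exists s : Z, forall x : R, nth i bp 0 <= x <= nth (S i) bp 0 ->
        g x = g (nth i bp 0) + powerRZ 2 s * (x - nth i bp 0).

(* t = k / 2^n with k odd, 0 < k < 2^n: t in (0,1) dyadic with terminating
   binary expansion .a_1...a_n, a_n = 1, and |t| = n. *)
Definition dyadic_repr (t : R) (n k : nat) : Prop :=
  (0 < k < 2 ^ n)%nat /\ Nat.odd k = true /\ t = INR k / 2 ^ n.

(* the n binary digits of k, most significant first: a_1 ... a_n *)
Fixpoint bits (n k : nat) : list bool :=
  match n with
  | O => []
  | S n' => bits n' (k / 2) ++ [Nat.odd k]
  end.

(* (L,R,B) triples; colors 0,1,2 represent Z_3 *)
Definition lrb_step (tr : nat * nat * nat) (a : bool) : nat * nat * nat :=
  let '(l, r, b) := tr in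
  if a then (b, r, l)   (* z1 : (B(z), R(z), L(z)) *)
  else (l, b, r).       (* z0 : (L(z), B(z), R(z)) *)

Definition lrb (w : list bool) : nat * nat * nat :=
  fold_left lrb_step w (0%nat, 1%nat, 2%nat).

Definition omega_word (w : list bool) : nat :=
  let '(l, _, _) := lrb w in l.

(* Near 0 every g in F is t |-> 2^s t, because its first breakpoint is a
   positive dyadic rational.  Multiplying t by a power of 2 only adds or
   removes leading zeros of its binary expansion, and a leading 0 acts on the
   triple (L,R,B) = (0,1,2) by fixing L and exchanging the colors 1 and 2;
   so it preserves omega(t) = 0. *)

From Stdlib Require Import Reals List Arith ZArith Lia Lra.
Open Scope R_scope.

Definition swap12 (c : nat) : nat :=
  match c with 1%nat => 2%nat | 2%nat => 1%nat | _ => c end.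

Lemma swap12_eq0 (c : nat) : swap12 c = 0%nat <-> c = 0%nat.
Proof. destruct c as [|[|[|c]]]; simpl; split; intro; lia. Qed.

Lemma fold_lrb_step_swap12 (w : list bool) (l r b : nat) :
  fold_left lrb_step w (swap12 l, swap12 r, swap12 b) =
  let '(l', r', b') := fold_left lrb_step w (l, r, b) in
  (swap12 l', swap12 r', swap12 b').
Proof.
  revert l r b; induction w as [|[|] w IH]; intros l r b; simpl; auto.
Qed.

Lemma lrb_repeat_false (j : nat) :
  lrb (repeat false j) = if Nat.even j then (0, 1, 2)%nat else (0, 2, 1)%nat.
Proof.
  induction j as [|j IH]; [reflexivity|].
  unfold lrb in *. change (repeat false (S j)) with (false :: repeat false j).
  rewrite repeat_cons, fold_left_app, IH.
  rewrite Nat.even_succ, <- Nat.negb_even.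
  destruct (Nat.even j); reflexivity.
Qed.

Lemma omega_word_repeat_false_app (j : nat) (w : list bool) :
  omega_word (repeat false j ++ w) =
  if Nat.even j then omega_word w else swap12 (omega_word w).
Proof.
  unfold omega_word, lrb. rewrite fold_left_app.
  fold (lrb (repeat false j)). rewrite lrb_repeat_false.
  destruct (Nat.even j); [reflexivity|].
  change (0, 2, 1)%nat with (swap12 0, swap12 1, swap12 2).
  rewrite fold_lrb_step_swap12.
  destruct (fold_left lrb_step w (0, 1, 2)%nat) as [[l r] b]. reflexivity.
Qed.

Lemma omega_word_repeat_false_app_eq0 (j : nat) (w : list bool) :
  omega_word (repeat false j ++ w) = 0%nat <-> omega_word w = 0%nat.
Proof.
  rewrite omega_word_repeat_false_app.
  destruct (Nat.even j); [reflexivity|apply swap12_eq0].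
Qed.

Lemma bits_0 (j : nat) : bits j 0 = repeat false j.
Proof.
  induction j as [|j IH]; [reflexivity|].
  simpl. rewrite IH, repeat_cons. reflexivity.
Qed.

Lemma bits_add (a j k : nat) :
  (k < 2 ^ a)%nat -> bits (a + j) k = repeat false j ++ bits a k.
Proof.
  revert k; induction a as [|a IH]; intros k Hk.
  - assert (k = 0%nat) by (simpl in Hk; lia); subst.
    simpl. rewrite bits_0, app_nil_r. reflexivity.
  - rewrite Nat.add_succ_l. cbn [bits]. rewrite IH, app_assoc; [reflexivity|].
    apply Nat.Div0.div_lt_upper_bound. rewrite Nat.pow_succ_r' in Hk. lia.
Qed.

Lemma pow2_pos (n : nat) : 0 < 2 ^ n.
Proof. apply pow_lt; lra. Qed.

Lemma inv_pow2_add_le (p q : nat) : / 2 ^ (p + q) <= / 2 ^ p.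
Proof. apply Rinv_le_contravar; [apply pow2_pos | apply Rle_pow; [lra | lia]]. Qed.

Lemma dyadic_repr_div_pow2 (t : R) (n k j : nat) :
  dyadic_repr t n k -> dyadic_repr (t / 2 ^ j) (n + j) k.
Proof.
  intros (Hk & Hodd & ->). split; [|split]; auto.
  - rewrite Nat.pow_add_r. pose proof (Nat.pow_nonzero 2 j). nia.
  - rewrite pow_add. pose proof (pow2_pos n); pose proof (pow2_pos j). field; lra.
Qed.

Lemma dyadic_repr_mul_pow2 (t : R) (n k j : nat) :
  dyadic_repr t n k -> 2 ^ j * t < 1 ->
  (k < 2 ^ (n - j))%nat /\ (j <= n)%nat /\ dyadic_repr (2 ^ j * t) (n - j) k.
Proof.
  intros (Hk & Hodd & ->) Hlt.
  assert (Hkj : (k * 2 ^ j < 2 ^ n)%nat).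
  { apply INR_lt. rewrite mult_INR, !pow_INR. change (INR 2) with 2.
    pose proof (pow2_pos n).
    apply (Rmult_lt_compat_r (2 ^ n)) in Hlt; [|assumption].
    replace (2 ^ j * (INR k / 2 ^ n) * 2 ^ n) with (INR k * 2 ^ j) in Hlt
      by (field; lra). lra. }
  assert (Hjn : (j <= n)%nat).
  { destruct (le_lt_dec j n) as [|Hnj]; [assumption|].
    pose proof (Nat.pow_lt_mono_r 2 n j ltac:(lia) Hnj).
    destruct k as [|k]; [lia|]. rewrite Nat.mul_succ_l in Hkj. lia. }
  assert (Hklt : (k < 2 ^ (n - j))%nat).
  { apply (Nat.mul_lt_mono_pos_r (2 ^ j)); [apply Nat.neq_0_lt_0, Nat.pow_nonzero; lia|].
    rewrite <- Nat.pow_add_r, Nat.sub_add; assumption. }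
  split; [assumption | split; [assumption | split; [lia | split; [assumption|]]]].
  replace n with (n - j + j)%nat at 1 by lia. rewrite pow_add.
  pose proof (pow2_pos (n - j)); pose proof (pow2_pos j). field; lra.
Qed.

Definition omega_zero (t : R) : Prop :=
  exists n k : nat, dyadic_repr t n k /\ omega_word (bits n k) = 0%nat.

Lemma omega_zero_div_pow2 (t : R) (j : nat) :
  omega_zero t -> omega_zero (t / 2 ^ j).
Proof.
  intros (n & k & Hrepr & Hom).
  exists (n + j)%nat, k. split; [now apply dyadic_repr_div_pow2|].
  destruct Hrepr as [Hk _].
  rewrite bits_add by lia. now apply omega_word_repeat_false_app_eq0.
Qed.

Lemma omega_zero_mul_pow2 (t : R) (j : nat) :
  omega_zero t -> 2 ^ j * t < 1 -> omega_zero (2 ^ j * t).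
Proof.
  intros (n & k & Hrepr & Hom) Hlt.
  destruct (dyadic_repr_mul_pow2 t n k j Hrepr Hlt) as (Hk & Hjn & Hrepr').
  exists (n - j)%nat, k. split; [assumption|].
  replace n with (n - j + j)%nat in Hom by lia.
  rewrite bits_add in Hom by assumption.
  now apply omega_word_repeat_false_app_eq0 in Hom.
Qed.

Lemma omega_zero_mul_powerRZ (t : R) (s : Z) :
  omega_zero t -> powerRZ 2 s * t < 1 -> omega_zero (powerRZ 2 s * t).
Proof.
  destruct s as [|q|q]; intros Ht Hlt.
  - exact (omega_zero_mul_pow2 t 0 Ht Hlt).
  - exact (omega_zero_mul_pow2 t (Pos.to_nat q) Ht Hlt).
  - change (powerRZ 2 (Z.neg q)) with (/ 2 ^ Pos.to_nat q).
    rewrite Rmult_comm. now apply omega_zero_div_pow2.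
Qed.

Lemma powerRZ2_le_pow_abs (s : Z) : powerRZ 2 s <= 2 ^ Z.abs_nat s.
Proof.
  destruct s as [|q|q]; simpl; [lra | lra |].
  pose proof (pow_R1_Rle 2 (Pos.to_nat q) ltac:(lra)) as Hge1.
  pose proof (Rinv_le_contravar 1 _ Rlt_0_1 Hge1). rewrite Rinv_1 in *. lra.
Qed.

Lemma powerRZ2_mul_lt_inv_pow2 (s : Z) (p : nat) (t : R) :
  0 < t < / 2 ^ (p + Z.abs_nat s) -> powerRZ 2 s * t < / 2 ^ p.
Proof.
  intros [Ht0 Ht1].
  pose proof (pow2_pos p); pose proof (pow2_pos (Z.abs_nat s)).
  apply (Rle_lt_trans _ (2 ^ Z.abs_nat s * t)).
  - apply Rmult_le_compat_r; [lra | apply powerRZ2_le_pow_abs].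
  - apply (Rmult_lt_compat_l (2 ^ Z.abs_nat s)) in Ht1; [|assumption].
    rewrite pow_add in Ht1.
    replace (2 ^ Z.abs_nat s * / (2 ^ p * 2 ^ Z.abs_nat s)) with (/ 2 ^ p) in Ht1
      by (field; lra).
    exact Ht1.
Qed.

Lemma dyadic_pos_ge_inv_pow2 (x : R) : dyadic x -> 0 < x -> exists p : nat, / 2 ^ p <= x.
Proof.
  intros (a & p & ->) Hx. exists p.
  pose proof (pow2_pos p).
  assert (Ha : 1 <= IZR a).
  { apply IZR_le. enough (0 < a)%Z by lia. apply lt_IZR.
    apply (Rmult_lt_compat_r (2 ^ p)) in Hx; [|assumption].
    replace (IZR a / 2 ^ p * 2 ^ p) with (IZR a) in Hx by (field; lra). lra. }
  unfold Rdiv. rewrite <- (Rmult_1_l (/ 2 ^ p)) at 1.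
  apply Rmult_le_compat_r; [left; now apply Rinv_0_lt_compat | exact Ha].
Qed.

Lemma thompsonF_linear_near_0 (g : R -> R) :
  thompsonF g -> exists (s : Z) (p : nat), forall t : R,
    0 <= t <= / 2 ^ p -> g t = powerRZ 2 s * t.
Proof.
  intros (g0 & _ & bp & Hlen & Hfirst & _ & Hdy & Hpieces).
  destruct (Hpieces 0%nat ltac:(lia)) as [Hx1 [s Hs]].
  rewrite Hfirst, g0 in *.
  assert (Hd : dyadic (nth 1 bp 0)) by (rewrite Forall_nth in Hdy; apply Hdy; lia).
  destruct (dyadic_pos_ge_inv_pow2 _ Hd Hx1) as [p Hp].
  exists s, p. intros t Ht.
  rewrite Hs by lra. ring.
Qed.

Theorem lemma2p12 (g : R -> R) (hg : thompsonF g) :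
  exists m : nat,
    forall (t : R) (n k : nat),
      dyadic_repr t n k ->
      Nat.even n = true ->
      omega_word (bits n k) = 0%nat ->
      0 < t < / 2 ^ m ->
      exists n' k' : nat,
        dyadic_repr (g t) n' k' /\
        omega_word (bits n' k') = omega_word (bits n k).
Proof.
  destruct (thompsonF_linear_near_0 g hg) as (s & p & Hlin).
  exists (p + Z.abs_nat s)%nat.
  intros t n k Hrepr _ Hom Ht.
  pose proof (inv_pow2_add_le p (Z.abs_nat s)).
  pose proof (inv_pow2_add_le 0 p) as Hle1.
  rewrite Nat.add_0_l, pow_O, Rinv_1 in Hle1.
  pose proof (powerRZ2_mul_lt_inv_pow2 s p t Ht).
  rewrite Hom, Hlin by lra.
  apply omega_zero_mul_powerRZ; [exists n, k; auto | lra].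
Qed.
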